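(* Let $d\ge1$ and let $\mu:\mathbb{R}^d\to(0,\infty)$ be localized to the unit ball with $\sum_{a\in\mathbb{Z}^d}\mu(x-a)=1$ and $\mu(x)\ge c(1+|x|)^{-10d}$ for some $c>0$. Then there exists $C>0$ such that for every Schwartz function $K\in\mathcal{S}(\mathbb{R}^d)$, every $B\subset\mathbb{Z}^d$ and every $x\in\mathbb{R}^d$, \[ |K*\mu_B(x)|\le C\left(\int|K(y)|(1+|y|^{10d})\,dy\right)\mu_B(x). \]
   Context: A bounded function $f$ on $\mathbb{R}^d$ is localized to the unit ball if there is a constant $C$ with $|f(x)|\le C$, $|f(x)|\le C|x|^{-10d}$ and $|\nabla f(x)|\le C|x|^{-10d-1}$. $\mu_a(x)=\mu(x-a)$ and $\mu_B=\sum_{b\in B}\mu_b$. *)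

From HB Require Import structures.
From mathcomp Require Import all_boot all_order all_algebra.
From mathcomp Require Import all_classical all_reals all_analysis.
Set Implicit Arguments. Unset Strict Implicit. Unset Printing Implicit Defensive.
Import Order.TTheory GRing.Theory Num.Theory.
Import numFieldNormedType.Exports.
Local Open Scope classical_set_scope.
Local Open Scope ring_scope.

Section Defs.
Context {R : realType}.

(* Euclidean norm |x| on R^d (the library norm on 'rV is the sup norm). *)
Definition eucl {d : nat} (x : 'rV[R]_d) : R :=
  Num.sqrt (\sum_(i < d) x ord0 i ^+ 2).

Definition evec {d : nat} (i : 'I_d) : 'rV[R]_d := delta_mx ord0 i.

Definition grad_norm {d : nat} (f : 'rV[R]_d -> R) (x : 'rV[R]_d) : R :=
  Num.sqrt (\sum_(i < d) ('D_(evec i) f x) ^+ 2).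

(* f is localized to the unit ball (constant C). f is assumed differentiable,
   since the definition refers to its gradient; the decay bounds are for x <> 0. *)
Definition localized {d : nat} (f : 'rV[R]_d -> R) : Prop :=
  (forall x, differentiable f x) /\
  exists C : R,
    (forall x, `|f x| <= C) /\
    (forall x, x != 0 -> `|f x| <= C / eucl x ^+ (10 * d)) /\
    (forall x, x != 0 -> grad_norm f x <= C / eucl x ^+ (10 * d + 1)).

Fixpoint pder {d : nat} (l : seq 'I_d) (f : 'rV[R]_d -> R) : 'rV[R]_d -> R :=
  match l with
  | [::] => f
  | i :: l' => 'D_(evec i) (pder l' f)
  end.

Definition schwartz {d : nat} (f : 'rV[R]_d -> R) : Prop :=
  (forall (l : seq 'I_d) x, differentiable (pder l f) x) /\
  (forall (l : seq 'I_d) (k : nat), exists M : R,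
      forall x, (1 + eucl x) ^+ k * `|pder l f x| <= M).

(* Lebesgue integral over R^d, computed as iterated one-dimensional Lebesgue
   integrals  int dx_1 ... int dx_d  (by Fubini/Tonelli this equals the
   integral w.r.t. d-dimensional Lebesgue measure for the (continuous,
   absolutely integrable or nonnegative) integrands used below). *)
Fixpoint iint (d : nat) : ('rV[R]_d -> \bar R) -> \bar R :=
  match d return ('rV[R]_d -> \bar R) -> \bar R with
  | 0 => fun f => f 0
  | n.+1 => fun f =>
      (\int[lebesgue_measure]_t
         iint (fun y : 'rV[R]_n => f (row_mx (\row_(j < 1) t) y)))%E
  end.

Definition zvec {d : nat} (a : 'rV[int]_d) : 'rV[R]_d := map_mx (fun z : int => z%:~R) a.

Definition muB {d : nat} (mu : 'rV[R]_d -> R) (B : set 'rV[int]_d)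
  (x : 'rV[R]_d) : \bar R :=
  \esum_(b in B) (mu (x - zvec b))%:E.

Definition convB {d : nat} (K mu : 'rV[R]_d -> R) (B : set 'rV[int]_d)
  (x : 'rV[R]_d) : \bar R :=
  iint (fun y => ((K y)%:E * muB mu B (x - y))%E).

End Defs.

From HB Require Import structures.
From mathcomp Require Import all_boot all_order all_algebra.
From mathcomp Require Import all_classical all_reals all_analysis.
From mathcomp Require Import ring lra measurable_realfun.
Import Order.TTheory GRing.Theory Num.Theory.
Import numFieldNormedType.Exports.
Local Open Scope classical_set_scope.
Local Open Scope ring_scope.

(* The lower bound on mu and the decay of mu give the shift inequality
   mu (z - y) <= K (1 + |y|^(10d)) mu z, which is summed over the points z - b,
   b in B, to get the same inequality for mu_B and then integrated against |K|.
   The weighted integral of a Schwartz function is finite by comparison with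
   prod_i (1 + y_i^2)^-1, whose integral over R^d is pi^d. *)

Lemma abse_subr_le {R : realFieldType} (a b c : \bar R) :
  (0 <= a -> 0 <= b -> a <= c -> b <= c -> `|a - b| <= c)%E.
Proof.
case: a => [a||] //; case: b => [b||] //; case: c => [c||] //=;
  rewrite ?lee_fin ?leey // => a0 b0 ac bc.
by rewrite ler_distl; apply/andP; split; lra.
Qed.

Section integral_le.
Import HBNNSimple.
Context {d} {T : measurableType d} {R : realType} (mu : {measure set T -> \bar R}).
Local Open Scope ereal_scope.

(* The integral of a nonnegative function is a sup over the simple functions
   below it, so none of the comparisons below needs measurability. *)
Lemma ge0_le_integral_any (f g : T -> \bar R) : (forall x, 0 <= f x) ->
  (forall x, f x <= g x) -> \int[mu]_x f x <= \int[mu]_x g x.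
Proof.
move=> f0 fg; have g0 x : 0 <= g x by exact: le_trans (f0 x) (fg x).
rewrite !ge0_integralTE//; apply: ereal_sup_le => _ /= [h hf <-].
by exists h => //= x; exact: le_trans (hf x) (fg x).
Qed.

Lemma le_integral_any (f g : T -> \bar R) :
  (forall x, f x <= g x) -> \int[mu]_x f x <= \int[mu]_x g x.
Proof.
move=> fg; rewrite integralE [X in _ <= X]integralE; apply: leeB.
  apply: ge0_le_integral_any => x; first exact: funepos_ge0.
  by apply: (@funepos_le _ _ setT); rewrite ?inE // => y _; exact: fg.
apply: ge0_le_integral_any => x; first exact: funeneg_ge0.
by apply: (@funeneg_le _ _ setT); rewrite ?inE // => y _; exact: fg.
Qed.

Lemma le_abse_integral_any (f : T -> \bar R) :
  `|\int[mu]_x f x| <= \int[mu]_x `|f x|.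
Proof.
have fabsE x : `|f x| = f^\+ x + f^\- x := congr1 (fun h => h x) (fune_abse f).
rewrite integralE; apply: abse_subr_le.
- by apply: integral_ge0 => x _; exact: funepos_ge0.
- by apply: integral_ge0 => x _; exact: funeneg_ge0.
- apply: ge0_le_integral_any => x; first exact: funepos_ge0.
  by rewrite fabsE leeDl ?funeneg_ge0.
- apply: ge0_le_integral_any => x; first exact: funeneg_ge0.
  by rewrite fabsE leeDr ?funepos_ge0.
Qed.

Lemma ge0_integral_mulr_le (g : T -> \bar R) (c : R) : (0 <= c)%R ->
  (forall x, 0 <= g x) -> \int[mu]_x (g x * c%:E) <= \int[mu]_x g x * c%:E.
Proof.
move=> c0 g0; have [->|cneq0] := eqVneq c 0%R.
  by rewrite mule0; under eq_integral do rewrite mule0; rewrite integral0.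
have cgt0 : (0 < c)%R by rewrite lt0r cneq0.
have gc0 x : 0 <= g x * c%:E by rewrite mule_ge0.
rewrite !ge0_integralTE//; apply: ge_ereal_sup => _ /= [h hle <-].
have ic0 : (0 <= c^-1)%R by rewrite invr_ge0.
pose h' := scale_nnsfun h ic0.
have h'E : sintegral mu h' = c^-1%:E * sintegral mu h.
  by rewrite -sintegralrM; apply: eq_sintegral.
have -> : sintegral mu h = c%:E * sintegral mu h'.
  by rewrite h'E muleA -EFinM mulfV // mul1e.
rewrite muleC; apply: lee_wpmul2r => //.
apply: ereal_sup_ubound; exists h' => //= x.
have := hle x; have := g0 x; case: (g x) => [r||] //=; rewrite ?leey //.
rewrite -EFinM !lee_fin => _ hr.
by rewrite -(ler_pM2l cgt0) mulrA mulfV ?mul1r // mulrC.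
Qed.

End integral_le.

Section iint_le.
Context {R : realType}.
Local Open Scope ereal_scope.

Lemma le_iint {n} (f g : 'rV[R]_n -> \bar R) :
  (forall y, f y <= g y) -> iint f <= iint g.
Proof.
elim: n f g => [|n IH] f g fg /=; first exact: fg.
by apply: le_integral_any => t; apply: IH.
Qed.

Lemma iint_ge0 {n} (f : 'rV[R]_n -> \bar R) : (forall y, 0 <= f y) -> 0 <= iint f.
Proof.
elim: n f => [|n IH] f f0 /=; first exact: f0.
by apply: integral_ge0 => t _; apply: IH.
Qed.

Lemma le_abse_iint {n} (f : 'rV[R]_n -> \bar R) :
  `|iint f| <= iint (fun y => `|f y|).
Proof.
elim: n f => [|n IH] f //=.
apply: le_trans (le_abse_integral_any _ _) _.
by apply: le_integral_any => t; apply: IH.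
Qed.

Lemma iint_mulr_le {n} (f : 'rV[R]_n -> \bar R) (c : R) : (0 <= c)%R ->
  (forall y, 0 <= f y) -> iint (fun y => f y * c%:E) <= iint f * c%:E.
Proof.
move=> c0; elim: n f => [|n IH] f f0 //=.
apply: le_trans; last by apply: ge0_integral_mulr_le => // t; apply: iint_ge0.
by apply: le_integral_any => t; apply: IH.
Qed.

End iint_le.

Section iint_oneDsqrV.
Context {R : realType}.
Local Open Scope ereal_scope.

Lemma integralT_oneDsqrV :
  \int[lebesgue_measure]_t ((oneDsqr t)^-1 : R)%:E = (pi : R)%:E.
Proof.
rewrite ge0_symfun_integralT.
- by rewrite -set_itvcy integral0y_oneDsqr -EFinM mulrC divfK.
- by move=> x; rewrite invr_ge0 (le_trans _ (oneDsqr_ge1 x)).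
- exact: continuous_oneDsqrV.
- by move=> x /=; rewrite /oneDsqr sqrrN.
Qed.

Lemma row_mx_cons0 n (t : R) (y : 'rV[R]_n) :
  (row_mx (\row_(j < 1) t) y : 'rV_n.+1) ord0 ord0 = t.
Proof. by rewrite mxE; case: splitP => [j _|k //]; rewrite mxE. Qed.

Lemma row_mx_consS n (t : R) (y : 'rV[R]_n) (i : 'I_n) :
  (row_mx (\row_(j < 1) t) y : 'rV_n.+1) ord0 (lift ord0 i) = y ord0 i.
Proof.
rewrite mxE; case: splitP => [j /= ji|k /= ki].
  by have := ltn_ord j; rewrite -ji.
by congr (y _ _); apply: val_inj; move: ki; rewrite /bump /= add1n => -[].
Qed.

Lemma iint_prod_oneDsqrV_le n (c : R) : (0 <= c)%R ->
  iint (fun y : 'rV[R]_n => (c * \prod_(i < n) (oneDsqr (y ord0 i))^-1)%:E)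
  <= (c * pi ^+ n)%:E.
Proof.
elim: n c => [|n IH] c c0 /=; first by rewrite big_ord0 expr0.
have g0 t : (0 <= (oneDsqr t)^-1 :> R)%R.
  by rewrite invr_ge0 (le_trans _ (oneDsqr_ge1 t)).
apply: (@le_trans _ _
    (\int[lebesgue_measure]_t ((c * pi ^+ n)%:E * ((oneDsqr t)^-1)%:E))).
  apply: le_integral_any => t.
  apply: le_trans; last first.
    apply: le_trans (IH (c * (oneDsqr t)^-1)%R (mulr_ge0 c0 (g0 t))) _.
    by rewrite -EFinM lee_fin mulrAC.
  apply: le_iint => y; rewrite lee_fin big_ord_recl row_mx_cons0 mulrA.
  by under eq_bigr do rewrite row_mx_consS.
rewrite ge0_integralZl_EFin //; last 2 first.
- apply/measurable_EFinP; apply: continuous_measurable_fun.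
  exact: continuous_oneDsqrV.
- by rewrite mulr_ge0 // exprn_ge0 // pi_ge0.
by rewrite integralT_oneDsqrV -EFinM exprSr mulrA.
Qed.

End iint_oneDsqrV.

Section real_inequalities.
Context {R : realFieldType}.

Lemma oneDX_le_exprD (e : R) m : 0 <= e -> 1 + e ^+ m <= 2 * (1 + e) ^+ m.
Proof.
move=> e0; rewrite mulr2n mulrDl mul1r lerD //.
  by rewrite exprn_ege1 // lerDl.
by rewrite lerXn2r ?nnegrE ?addr_ge0 ?lerDr.
Qed.

Lemma exprD_le_oneDX (e : R) m : 0 <= e -> (1 + e) ^+ m <= 2 ^+ m * (1 + e ^+ m).
Proof.
move=> e0; have [e1|e1] := lerP e 1.
  apply: (@le_trans _ _ (2 ^+ m)).
    by apply: lerXn2r; rewrite ?nnegrE ?addr_ge0 //; lra.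
  by rewrite ler_peMr ?exprn_ge0 // lerDl exprn_ge0.
apply: (@le_trans _ _ ((2 * e) ^+ m)).
  by apply: lerXn2r; rewrite ?nnegrE ?addr_ge0 ?mulr_ge0 //; lra.
by rewrite exprMn ler_wpM2l ?exprn_ge0 // lerDr.
Qed.

End real_inequalities.

Section sqrt_inequalities.
Context {R : rcfType}.

Lemma sqrt_sqrD_le_normD (a b : R) : Num.sqrt (a ^+ 2 + b ^+ 2) <= `|a| + `|b|.
Proof.
have h : a ^+ 2 + b ^+ 2 <= (`|a| + `|b|) ^+ 2.
  rewrite sqrrD !real_normK ?num_real // -addrA lerD2l lerDr.
  by rewrite mulrn_wge0 // mulr_ge0.
apply: le_trans (ler_wsqrtr h) _.
by rewrite sqrtr_sqr ger0_norm // addr_ge0.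
Qed.

Lemma normr_le_sqrt_sqrD (a b : R) : `|a| <= Num.sqrt (a ^+ 2 + b ^+ 2).
Proof.
by rewrite -[X in X <= _]sqrtr_sqr; apply: ler_wsqrtr; rewrite lerDl sqr_ge0.
Qed.

End sqrt_inequalities.

Section euclidean_norm.
Context {R : realType} {d : nat}.

Lemma eucl_ge0 (x : 'rV[R]_d) : 0 <= eucl x.
Proof. exact: sqrtr_ge0. Qed.

Lemma eucl0 : eucl (0 : 'rV[R]_d) = 0.
Proof. by rewrite /eucl big1 ?sqrtr0 // => i _; rewrite mxE expr0n. Qed.

Lemma sqr_eucl (x : 'rV[R]_d) : eucl x ^+ 2 = \sum_(i < d) x ord0 i ^+ 2.
Proof. by rewrite /eucl sqr_sqrtr // sumr_ge0 // => i _; exact: sqr_ge0. Qed.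

Lemma sqr_coord_le_eucl (x : 'rV[R]_d) (i : 'I_d) :
  x ord0 i ^+ 2 <= eucl x ^+ 2.
Proof.
by rewrite sqr_eucl (bigD1 i) //= lerDl sumr_ge0 // => j _; exact: sqr_ge0.
Qed.

(* Coordinatewise a^2 <= 2 (a - b)^2 + 2 b^2; this avoids Minkowski's inequality. *)
Lemma eucl_le_2D (z y : 'rV[R]_d) : eucl z <= 2 * (eucl (z - y) + eucl y).
Proof.
have u0 := eucl_ge0 (z - y); have v0 := eucl_ge0 y.
have h0 : 0 <= 2 * (eucl (z - y) + eucl y) by rewrite mulr_ge0 ?addr_ge0.
rewrite -[X in _ <= X]ger0_norm // -sqrtr_sqr /eucl ler_wsqrtr //.
rewrite -/(eucl _) -/(eucl _).
apply: (@le_trans _ _ (2 * eucl (z - y) ^+ 2 + 2 * eucl y ^+ 2)); last by nra.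
rewrite !sqr_eucl !mulr_sumr -big_split /=; apply: ler_sum => i _.
rewrite !mxE -subr_ge0.
have -> : 2 * (z ord0 i - y ord0 i) ^+ 2 + 2 * y ord0 i ^+ 2 - z ord0 i ^+ 2
          = (z ord0 i - 2 * y ord0 i) ^+ 2 by ring.
exact: sqr_ge0.
Qed.

Lemma oneD_eucl_le (z y : 'rV[R]_d) :
  1 + eucl z <= 2 * ((1 + eucl (z - y)) * (1 + eucl y)).
Proof.
have := eucl_le_2D z y; have := eucl_ge0 (z - y); have := eucl_ge0 y; nra.
Qed.

Lemma prod_oneDsqr_le (y : 'rV[R]_d) :
  \prod_(i < d) oneDsqr (y ord0 i) <= (1 + eucl y) ^+ (2 * d).
Proof.
apply: (@le_trans _ _ (\prod_(i < d) (1 + eucl y) ^+ 2)); last first.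
  by rewrite prodr_const card_ord -exprM mulnC.
apply: ler_prod => i _; rewrite (le_trans _ (oneDsqr_ge1 _)) //=.
apply: (@le_trans _ _ (1 + eucl y ^+ 2)); first by rewrite lerD2l sqr_coord_le_eucl.
rewrite sqrrD expr1n -addrA lerD2l lerDr.
by rewrite mulrn_wge0 // mulr_ge0 ?eucl_ge0.
Qed.

End euclidean_norm.

Section decay.
Context {R : realType} {d : nat}.

Lemma localized_weighted_bound {f : 'rV[R]_d -> R} : localized f ->
  exists C, forall w, `|f w| * (1 + eucl w) ^+ (10 * d) <= C.
Proof.
move=> [_ [C [fC [f_decay _]]]]; set D := (10 * d)%N.
have C0 : 0 <= C := le_trans (normr_ge0 _) (fC 0).
exists (C * 2 ^+ D) => w; have e0 := eucl_ge0 w.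
have [e1|e1] := lerP (eucl w) 1.
  apply: ler_pM; rewrite ?normr_ge0 ?exprn_ge0 ?addr_ge0 //.
  by apply: lerXn2r; rewrite ?nnegrE ?addr_ge0 //; lra.
have eD : 0 < eucl w ^+ D by rewrite exprn_gt0 //; lra.
have w0 : w != 0 by apply: contraTneq e1 => ->; rewrite eucl0 ltr10.
have := f_decay w w0; rewrite ler_pdivlMr // => fw.
apply: (@le_trans _ _ (`|f w| * (2 * eucl w) ^+ D)).
  by rewrite ler_wpM2l // lerXn2r ?nnegrE ?addr_ge0 ?mulr_ge0 //; lra.
by rewrite exprMn mulrCA mulrC ler_wpM2r ?exprn_ge0.
Qed.

(* Compare mu (z - y) <= C / (1 + |z - y|)^D with mu z >= c / (1 + |z|)^D and
   use 1 + |z| <= 2 (1 + |z - y|) (1 + |y|). *)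
Lemma shift_le_of_decay {mu : 'rV[R]_d -> R} {D : nat} {c C : R} : 0 < c ->
  (forall w, `|mu w| * (1 + eucl w) ^+ D <= C) ->
  (forall x, c / (1 + eucl x) ^+ D <= mu x) ->
  forall z y, mu (z - y) <= C * 4 ^+ D / c * (1 + eucl y ^+ D) * mu z.
Proof.
move=> c0 mu_up mu_lo z y.
have pos (u : 'rV[R]_d) : 0 < (1 + eucl u) ^+ D.
  by rewrite exprn_gt0 // ltr_wpDr ?eucl_ge0.
have mu_ge0 (u : 'rV[R]_d) : 0 <= mu u.
  exact: ltW (lt_le_trans (divr_gt0 c0 (pos u)) (mu_lo u)).
have C0 : 0 <= C := le_trans (mulr_ge0 (normr_ge0 _) (ltW (pos 0))) (mu_up 0).
have mu_z : c <= mu z * (1 + eucl z) ^+ D by rewrite -ler_pdivrMr ?mu_lo.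
have mu_zy : mu (z - y) * (1 + eucl (z - y)) ^+ D <= C.
  by have := mu_up (z - y); rewrite ger0_norm.
have weight_z : (1 + eucl z) ^+ D
    <= 2 ^+ D * (1 + eucl (z - y)) ^+ D * (2 ^+ D * (1 + eucl y ^+ D)).
  apply: (@le_trans _ _ ((2 * ((1 + eucl (z - y)) * (1 + eucl y))) ^+ D)).
    by apply: lerXn2r; rewrite ?nnegrE ?oneD_eucl_le ?mulr_ge0 ?addr_ge0 ?eucl_ge0.
  rewrite !exprMn -mulrA ler_wpM2l ?exprn_ge0 //.
  rewrite ler_wpM2l ?exprn_ge0 ?addr_ge0 ?eucl_ge0 //.
  exact/exprD_le_oneDX/eucl_ge0.
set a := (1 + eucl (z - y)) ^+ D.
rewrite -(ler_pM2r (mulr_gt0 c0 (pos (z - y)))) -/a.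
apply: (@le_trans _ _ (C * c)).
  have -> : mu (z - y) * (c * a) = mu (z - y) * a * c by ring.
  by rewrite ler_wpM2r // ltW.
have four : 4 ^+ D = 2 ^+ D * 2 ^+ D :> R by rewrite -exprMn -natrM.
have -> : C * 4 ^+ D / c * (1 + eucl y ^+ D) * mu z * (c * a)
    = C * (mu z * (2 ^+ D * a * (2 ^+ D * (1 + eucl y ^+ D)))).
  by rewrite four; field; rewrite gt_eqF.
by rewrite ler_wpM2l // (le_trans mu_z) // ler_wpM2l ?mu_ge0.
Qed.

Lemma schwartz_normD_weighted_bound {Kr Ki : 'rV[R]_d -> R} (k : nat) :
  schwartz Kr -> schwartz Ki ->
  exists M, forall y, (1 + eucl y) ^+ k * Num.sqrt (Kr y ^+ 2 + Ki y ^+ 2) <= M.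
Proof.
move=> [_ Kr_decay] [_ Ki_decay].
have [Mr Mr_bound] := Kr_decay [::] k; have [Mi Mi_bound] := Ki_decay [::] k.
exists (Mr + Mi) => y.
apply: (@le_trans _ _ ((1 + eucl y) ^+ k * (`|Kr y| + `|Ki y|))).
  by rewrite ler_wpM2l ?exprn_ge0 ?addr_ge0 ?eucl_ge0 ?sqrt_sqrD_le_normD.
by rewrite mulrDr lerD ?Mr_bound ?Mi_bound.
Qed.

Lemma iint_weighted_fin_num {G : 'rV[R]_d -> R} {D : nat} {M : R} :
  (forall y, 0 <= G y) -> (forall y, (1 + eucl y) ^+ (D + 2 * d) * G y <= M) ->
  iint (fun y => (G y * (1 + eucl y ^+ D))%:E) \is a fin_num.
Proof.
move=> G0 G_decay.
have M0 : 0 <= M.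
  by apply: le_trans (G_decay 0); rewrite mulr_ge0 ?exprn_ge0 ?addr_ge0 ?eucl_ge0.
rewrite ge0_fin_numE; last first.
  by apply: iint_ge0 => y; rewrite lee_fin mulr_ge0 ?addr_ge0 ?exprn_ge0 ?eucl_ge0.
apply: le_lt_trans (ltry (2 * M * pi ^+ d)).
apply: (le_trans _ (iint_prod_oneDsqrV_le d _ (mulr_ge0 (ler0n _ 2) M0))).
apply: le_iint => y; rewrite lee_fin prodfV ler_pdivlMr; last first.
  by apply: prodr_gt0 => i _; rewrite (lt_le_trans ltr01 (oneDsqr_ge1 _)).
apply: (@le_trans _ _ (G y * (2 * (1 + eucl y) ^+ D) * (1 + eucl y) ^+ (2 * d))).
  apply: ler_pM; rewrite ?prod_oneDsqr_le //;
    rewrite ?mulr_ge0 ?addr_ge0 ?exprn_ge0 ?eucl_ge0 //.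
    by apply: prodr_ge0 => i _; rewrite (le_trans ler01 (oneDsqr_ge1 _)).
  by rewrite ler_wpM2l ?oneDX_le_exprD ?eucl_ge0.
rewrite (_ : _ * _ = 2 * ((1 + eucl y) ^+ (D + 2 * d) * G y)); last first.
  by rewrite exprD; ring.
by rewrite ler_wpM2l.
Qed.

End decay.

Section esum_le.
Context {R : realType} {T : choiceType}.
Local Open Scope ereal_scope.

Lemma le_esum_subset (A B : set T) (a : T -> \bar R) :
  A `<=` B -> \esum_(i in A) a i <= \esum_(i in B) a i.
Proof.
move=> AB; apply: ge_ereal_sup => _ [X [finX XA] <-].
by apply: ereal_sup_ubound; exists X => //; split => //; exact: subset_trans AB.
Qed.

Lemma esum_mull_le (A : set T) (a : T -> R) (k : R) : (0 <= k)%R ->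
  (forall i, (0 <= a i)%R) ->
  \esum_(i in A) (k * a i)%:E <= k%:E * \esum_(i in A) (a i)%:E.
Proof.
move=> k0 a0; apply: ge_ereal_sup => _ [X [finX XA] <-].
rewrite fsbig_finite //= sumEFin -mulr_sumr EFinM lee_wpmul2l //.
by apply: ereal_sup_ubound; exists X => //; rewrite fsbig_finite //= sumEFin.
Qed.

End esum_le.

Section muB.
Context {R : realType} {d : nat} {mu : 'rV[R]_d -> R}.
Hypothesis mu_ge0 : forall z, (0 <= mu z)%R.
Variable B : set 'rV[int]_d.
Local Open Scope ereal_scope.

Lemma muB_ge0 x : 0 <= muB mu B x.
Proof. by apply: esum_ge0 => b _; rewrite lee_fin. Qed.

Lemma muB_fin_num :
  (forall x, \esum_(a in [set: 'rV[int]_d]) (mu (x - zvec a))%:E = 1) ->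
  forall x, muB mu B x \is a fin_num.
Proof.
move=> mu_sum x; rewrite ge0_fin_numE ?muB_ge0 //.
by apply: le_lt_trans (ltry 1%R); rewrite -(mu_sum x); exact: le_esum_subset.
Qed.

Lemma muB_shift_le (w : 'rV[R]_d -> R) : (forall y, (0 <= w y)%R) ->
  (forall z y, (mu (z - y) <= w y * mu z)%R) ->
  forall x y, muB mu B (x - y) <= (w y)%:E * muB mu B x.
Proof.
move=> w0 mu_shift x y.
apply: (le_trans _ (esum_mull_le _ _ _ (w0 y) (fun b => mu_ge0 _))).
by apply: le_esum => b _; rewrite lee_fin addrAC; exact: mu_shift.
Qed.

Lemma abse_convB_le (K G v : 'rV[R]_d -> R) (k : R) x : (0 <= k)%R ->
  (forall y, (0 <= v y)%R) -> (forall y, (`|K y| <= G y)%R) ->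
  (forall y, muB mu B (x - y) <= (k * v y)%:E * muB mu B x) ->
  muB mu B x \is a fin_num ->
  `|convB K mu B x| <= k%:E * iint (fun y => (G y * v y)%:E) * muB mu B x.
Proof.
move=> k0 v0 KG muB_shift muB_fin.
set m := fine (muB mu B x); have mE : muB mu B x = m%:E by rewrite fineK.
have m0 : (0 <= m)%R by rewrite -lee_fin -mE muB_ge0.
have G0 y : (0 <= G y)%R := le_trans (normr_ge0 _) (KG y).
apply: le_trans (le_abse_iint _) _.
apply: (@le_trans _ _ (iint (fun y => (G y * v y)%:E * (k * m)%:E))).
  apply: le_iint => y; rewrite abseM abse_EFin (gee0_abs (muB_ge0 _)).
  apply: le_trans (lee_wpmul2l _ (muB_shift y)) _; first by rewrite lee_fin.
  rewrite mE -!EFinM lee_fin.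
  rewrite (_ : G y * v y * (k * m) = G y * (k * v y * m))%R; last by ring.
  by rewrite ler_wpM2r ?mulr_ge0.
apply: le_trans (iint_mulr_le _ _ (mulr_ge0 k0 m0) _) _.
  by move=> y; rewrite lee_fin mulr_ge0.
by rewrite mE EFinM muleCA muleA.
Qed.

End muB.

Lemma sqrt_fine_sqrD_le {R : realType} (a b c : \bar R) : c \is a fin_num ->
  (`|a| <= c)%E -> (`|b| <= c)%E ->
  a \is a fin_num /\ b \is a fin_num /\
  ((Num.sqrt (fine a ^+ 2 + fine b ^+ 2))%:E <= 2%:E * c)%E.
Proof.
move=> c_fin ac bc; have c_lt : (c < +oo)%E by rewrite -(fineK c_fin) ltry.
have a_fin : a \is a fin_num by rewrite fin_num_abs (le_lt_trans ac).
have b_fin : b \is a fin_num by rewrite fin_num_abs (le_lt_trans bc).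
split => //; split => //.
move: ac bc; rewrite -(fineK a_fin) -(fineK b_fin) -(fineK c_fin) !abse_EFin.
rewrite -EFinM !lee_fin /= => ac bc.
by rewrite (le_trans (sqrt_sqrD_le_normD _ _)) // mulr_natl mulr2n lerD.
Qed.

Theorem lemma1p4 (R : realType) (n : nat) (mu : 'rV[R]_n.+1 -> R) :
  (forall x, 0 < mu x) ->
  localized mu ->
  (forall x, \esum_(a in [set: 'rV[int]_n.+1]) (mu (x - zvec a))%:E = 1%E) ->
  (exists c : R, 0 < c /\
     forall x, c / (1 + eucl x) ^+ (10 * n.+1) <= mu x) ->
  exists C : R, 0 < C /\
    forall (Kr Ki : 'rV[R]_n.+1 -> R), schwartz Kr -> schwartz Ki ->
    forall (B : set 'rV[int]_n.+1) (x : 'rV[R]_n.+1),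
      convB Kr mu B x \is a fin_num /\ convB Ki mu B x \is a fin_num /\
      ((Num.sqrt (fine (convB Kr mu B x) ^+ 2 + fine (convB Ki mu B x) ^+ 2))%:E
       <= C%:E
          * iint (fun y => (Num.sqrt (Kr y ^+ 2 + Ki y ^+ 2)
                             * (1 + eucl y ^+ (10 * n.+1)))%:E)
          * muB mu B x)%E.
Proof.
move=> mu_gt0 mu_loc mu_sum [c [c0 mu_lo]].
have mu_ge0 z := ltW (mu_gt0 z).
set D := (10 * n.+1)%N.
have [C mu_up] := localized_weighted_bound mu_loc.
have C0 : 0 < C.
  apply: lt_le_trans (mu_up 0).
  by rewrite eucl0 addr0 expr1n mulr1 normr_gt0 gt_eqF.
pose k := C * 4 ^+ D / c.
have k0 : 0 < k by rewrite !mulr_gt0 ?invr_gt0 ?exprn_gt0.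
have mu_shift := shift_le_of_decay c0 mu_up mu_lo.
exists (2 * k); split => [|Kr Ki Kr_sch Ki_sch B x]; first by rewrite mulr_gt0.
have weight0 (y : 'rV[R]_n.+1) : 0 <= 1 + eucl y ^+ D.
  by rewrite addr_ge0 ?exprn_ge0 ?eucl_ge0.
have muB_shift := muB_shift_le mu_ge0 B (fun y => k * (1 + eucl y ^+ D))
  (fun y => mulr_ge0 (ltW k0) (weight0 y)) mu_shift.
have muB_fin := muB_fin_num mu_ge0 B mu_sum x.
have [M G_decay] := schwartz_normD_weighted_bound (D + 2 * n.+1) Kr_sch Ki_sch.
have I_fin := iint_weighted_fin_num (fun y => sqrtr_ge0 _) G_decay.
pose G (y : 'rV[R]_n.+1) := Num.sqrt (Kr y ^+ 2 + Ki y ^+ 2).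
have conv_le (Kf : 'rV[R]_n.+1 -> R) : (forall y, `|Kf y| <= G y) ->
    (`|convB Kf mu B x|
     <= k%:E * (iint (fun y => (G y * (1 + eucl y ^+ D))%:E) * muB mu B x))%E.
  move=> Kf_le; rewrite muleA.
  exact: abse_convB_le (ltW k0) weight0 Kf_le (muB_shift x) muB_fin.
rewrite EFinM -!muleA; apply: sqrt_fine_sqrD_le.
- by rewrite !fin_numM.
- by apply: conv_le => y; exact: normr_le_sqrt_sqrD.
- by apply: conv_le => y; rewrite /G addrC normr_le_sqrt_sqrD.
Qed.
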